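(* Let $\lambda>0$ and let $f$ be analytic in $\mathbb{D}=\{z:|z|<1\}$ with $f(0)=0$, $f'(0)=1$. If $|f''(z)|\le2\lambda$ for all $z\in\mathbb{D}$, then $f\in\Omega_\lambda$. The number $2\lambda$ is best possible.
   Context: $\Omega_\lambda$ denotes the set of functions $f$ analytic in $\mathbb{D}$ with $f(0)=0$, $f'(0)=1$, such that $zf'(z)-f(z)=\lambda z^2\phi(z)$ for some analytic $\phi$ on $\mathbb{D}$ with $|\phi(z)|\le1$. *)

From Stdlib Require Import Reals.
From Coquelicot Require Import Coquelicot.
Open Scope R_scope.

Definition unit_disk (z : C) : Prop := Cmod z < 1.

Definition has_cderiv (f : C -> C) (z : C) (l : C) : Prop :=
  @is_derive C_AbsRing C_NormedModule f z l.

Definition analytic_in_disk (f : C -> C) : Prop :=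
  forall z, unit_disk z -> exists l, has_cderiv f z l.

Definition Omega (lam : R) (f : C -> C) : Prop :=
  exists f1 : C -> C,
    (forall z, unit_disk z -> has_cderiv f z (f1 z)) /\
    f (RtoC 0) = RtoC 0 /\ f1 (RtoC 0) = RtoC 1 /\
    exists phi : C -> C,
      analytic_in_disk phi /\
      (forall z, unit_disk z -> Cmod (phi z) <= 1) /\
      (forall z, unit_disk z ->
         Cminus (Cmult z (f1 z)) (f z) = Cmult (Cmult (RtoC lam) (Cmult z z)) (phi z)).

(* Put g(z) = z f'(z) - f(z). Then g(0) = 0 and g'(z) = z f''(z), so the mean value
   inequality along [0, z] gives |g(z)| <= lam |z|^2, i.e. phi = g / (lam z^2) is bounded by 1
   on the punctured disk. What remains is that 0 is a removable singularity of phi: Cauchy's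
   integral formula on the circle |w| = 1/2 (proved by contracting the circle to z) writes
   g(z) = z^2 K(z) near 0 with K(z) = (1/2pi) \int_0^{2pi} f(w) / (w - z)^2 dt, w = e^{it}/2,
   which is analytic, and |K(0)| <= lam by continuity. For sharpness, f(z) = z + c z^2 / 2
   has |f''| = c, while phi(1/2) = c / (2 lam) > 1 when c > 2 lam. *)

From Stdlib Require Import Reals Lra.
From Coquelicot Require Import Coquelicot.
Open Scope R_scope.

Lemma Cmod_triangle_rev (x y : C) : Cmod x - Cmod y <= Cmod (x - y).
Proof.
  assert (H := Cmod_triangle (x - y) y).
  replace (x - y + y)%C with x in H by ring. lra.
Qed.

Lemma Cmod_minus_sym (x y : C) : Cmod (x - y) = Cmod (y - x).
Proof. rewrite <- Cmod_opp. f_equal. ring. Qed.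

Lemma Cmod_le_Re_Im (x : C) : Cmod x <= Rabs (Re x) + Rabs (Im x).
Proof.
  replace x with (RtoC (Re x) + Ci * RtoC (Im x))%C at 1
    by (destruct x; unfold Re, Im, RtoC, Ci, Cplus, Cmult; simpl; f_equal; ring).
  eapply Rle_trans; [apply Cmod_triangle|].
  rewrite Cmod_mult, Cmod_Ci, !Cmod_R. lra.
Qed.

Lemma Cmod_RtoC_nonneg (x : R) : 0 <= x -> Cmod (RtoC x) = x.
Proof. intros Hx. rewrite Cmod_R. apply Rabs_pos_eq, Hx. Qed.

Lemma Cmod_div_le (x y : C) X Y : 0 < Y -> Cmod x <= X -> Y <= Cmod y -> Cmod (x / y) <= X / Y.
Proof.
  intros HY Hx Hy. assert (Hy0 : y <> 0%C) by (apply Cmod_gt_0; lra).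
  rewrite Cmod_div by exact Hy0. unfold Rdiv.
  apply Rmult_le_compat; [apply Cmod_ge_0|apply Rlt_le, Rinv_0_lt_compat; lra|exact Hx|].
  apply Rinv_le_contravar; assumption.
Qed.

Lemma Cminus_0_r (x : C) : (x - 0)%C = x.
Proof. ring. Qed.

Lemma RtoC_neq_0 (x : R) : x <> 0 -> RtoC x <> 0%C.
Proof. intros H E. apply H. apply (f_equal Re) in E. exact E. Qed.

Lemma is_derive_eps {K : AbsRing} {V : NormedModule K} (f : K -> V) x l :
  is_derive f x l <-> forall eps : posreal, exists delta : posreal, forall y,
    norm (minus y x) < delta ->
    norm (minus (minus (f y) (f x)) (scal (minus y x) l)) <= eps * norm (minus y x).
Proof.
  split.
  - intros [_ Hd] eps.
    assert (Hx : is_filter_lim (locally x) x) by (intros P HP; exact HP).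
    destruct (locally_le_locally_norm x _ (Hd x Hx eps)) as [d Hd2].
    exists d. intros y Hy. apply Hd2, norm_compat1, Hy.
  - intros H. split; [apply is_linear_scal_l|].
    intros x' Hx' eps.
    apply (@is_filter_lim_locally_unique K (AbsRing_NormedModule K)) in Hx'. subst x'.
    apply (locally_norm_le_locally x).
    destruct (H eps) as [d Hd]. exists d. exact Hd.
Qed.

Lemma has_cderiv_eps (f : C -> C) z l :
  has_cderiv f z l <-> forall eps, 0 < eps -> exists delta, 0 < delta /\ forall w,
    Cmod (w - z) < delta -> Cmod (f w - f z - l * (w - z))%C <= eps * Cmod (w - z).
Proof.
  assert (E : forall w, minus (minus (f w) (f z)) (scal (minus w z) l) = (f w - f z - l * (w - z))%C)
    by (intros w; unfold minus, plus, opp, scal; simpl; unfold mult; simpl; ring).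
  unfold has_cderiv. rewrite is_derive_eps. split.
  - intros H eps Heps. destruct (H (mkposreal eps Heps)) as [d Hd].
    exists d. split; [apply cond_pos|]. intros w Hw. rewrite <- E. exact (Hd w Hw).
  - intros H eps. destruct (H eps (cond_pos eps)) as [d [Hd0 Hd]].
    exists (mkposreal d Hd0). intros w Hw. rewrite E. exact (Hd w Hw).
Qed.

(* Stated with Cmod because the domain topology of has_cderiv (AbsRing_UniformSpace C_AbsRing)
   is not convertible to C_UniformSpace. *)
Definition C_continuous (h : C -> C) (z : C) : Prop :=
  forall eps, 0 < eps -> exists delta, 0 < delta /\
    forall w, Cmod (w - z) < delta -> Cmod (h w - h z) < eps.

Lemma has_cderiv_C_continuous (h : C -> C) z l : has_cderiv h z l -> C_continuous h z.
Proof.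
  intros H eps Heps.
  assert (Hc := @ex_derive_continuous C_AbsRing C_NormedModule h z (ex_intro _ l H)).
  assert (HP : locally (h z) (fun w : C => Cmod (w - h z) < eps)).
  { apply (@locally_le_locally_norm C_AbsRing C_NormedModule).
    exists (mkposreal eps Heps). intros w Hw. exact Hw. }
  destruct (Hc _ HP) as [d Hd].
  exists d. split; [apply cond_pos|]. intros w Hw. exact (Hd w Hw).
Qed.

(* Coquelicot's product and chain rules are stated in AbsRing_NormedModule C_AbsRing, while
   has_cderiv uses C_NormedModule. *)
Lemma has_cderiv_AbsRing (f : C -> C) z l :
  has_cderiv f z l <-> @is_derive C_AbsRing (AbsRing_NormedModule C_AbsRing) f z l.
Proof.
  unfold has_cderiv. rewrite !is_derive_eps.
  split; intros H eps; destruct (H eps) as [d Hd]; exists d; exact Hd.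
Qed.

Lemma has_cderiv_unique (f : C -> C) z l1 l2 :
  has_cderiv f z l1 -> has_cderiv f z l2 -> l1 = l2.
Proof.
  intros H1 H2. rewrite <- (is_C_derive_unique f z l1 H1). apply is_C_derive_unique, H2.
Qed.

Lemma has_cderiv_ext_loc (f g : C -> C) z l r : 0 < r ->
  (forall w, Cmod (w - z) < r -> f w = g w) -> has_cderiv f z l -> has_cderiv g z l.
Proof.
  intros Hr E H. apply (@is_derive_ext_loc C_AbsRing C_NormedModule f g z l); auto.
  exists (mkposreal r Hr). intros w Hw. apply E, Hw.
Qed.

Lemma has_cderiv_const (c : C) z : has_cderiv (fun _ => c) z (RtoC 0).
Proof. apply (@is_derive_const C_AbsRing C_NormedModule). Qed.

Lemma has_cderiv_id z : has_cderiv (fun w => w) z (RtoC 1).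
Proof. rewrite has_cderiv_AbsRing. apply (@is_derive_id C_AbsRing). Qed.

Lemma has_cderiv_plus (p q : C -> C) z lp lq : has_cderiv p z lp -> has_cderiv q z lq ->
  has_cderiv (fun w => p w + q w)%C z (lp + lq)%C.
Proof. apply (@is_derive_plus C_AbsRing C_NormedModule). Qed.

Lemma has_cderiv_minus (p q : C -> C) z lp lq : has_cderiv p z lp -> has_cderiv q z lq ->
  has_cderiv (fun w => p w - q w)%C z (lp - lq)%C.
Proof. apply (@is_derive_minus C_AbsRing C_NormedModule). Qed.

Lemma has_cderiv_mult (p q : C -> C) z lp lq : has_cderiv p z lp -> has_cderiv q z lq ->
  has_cderiv (fun w => p w * q w)%C z (lp * q z + p z * lq)%C.
Proof.
  rewrite !has_cderiv_AbsRing. intros Hp Hq.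
  exact (@is_derive_mult C_AbsRing p q z _ _ Hp Hq Cmult_comm).
Qed.

Lemma has_cderiv_Cmult_r (h : C -> C) c z l :
  has_cderiv h z l -> has_cderiv (fun w => h w * c)%C z (l * c)%C.
Proof.
  intros H. assert (H' := has_cderiv_mult _ _ z _ _ H (has_cderiv_const c z)).
  cbv beta in H'. replace (l * c + h z * RtoC 0)%C with (l * c)%C in H' by ring. exact H'.
Qed.

Lemma has_cderiv_comp (h q : C -> C) z lh lq : has_cderiv h (q z) lh -> has_cderiv q z lq ->
  has_cderiv (fun w => h (q w)) z (lq * lh)%C.
Proof.
  intros Hh Hq. rewrite has_cderiv_AbsRing in Hq.
  exact (@is_derive_comp C_AbsRing C_NormedModule h q z _ _ Hh Hq).
Qed.

Lemma has_cderiv_Cinv (w : C) : w <> 0%C -> has_cderiv Cinv w (- / (w * w))%C.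
Proof.
  intros Hw. rewrite has_cderiv_eps. intros eps Heps.
  set (m := Cmod w).
  assert (Hm : 0 < m) by (apply Cmod_gt_0; auto).
  exists (Rmin (m / 2) (eps * m * m * m / 2)). split.
  { apply Rmin_pos; [lra|]. apply Rdiv_lt_0_compat; [|lra]. repeat apply Rmult_lt_0_compat; lra. }
  intros v Hv.
  assert (Hv1 : Cmod (v - w) < m / 2) by (eapply Rlt_le_trans; [exact Hv|apply Rmin_l]).
  assert (Hv2 : Cmod (v - w) < eps * m * m * m / 2) by (eapply Rlt_le_trans; [exact Hv|apply Rmin_r]).
  assert (Hvm : m / 2 <= Cmod v).
  { generalize (Cmod_triangle_rev w v). rewrite Cmod_minus_sym. fold m. lra. }
  assert (Hv0 : v <> 0%C) by (apply Cmod_gt_0; lra).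
  replace (/ v - / w - - / (w * w) * (v - w))%C with ((v - w) * (v - w) / (w * w * v))%C
    by (field; auto).
  rewrite Cmod_div by (repeat apply Cmult_neq_0; auto).
  rewrite !Cmod_mult. fold m.
  apply Rmult_le_reg_r with (m * m * Cmod v); [apply Rmult_lt_0_compat; [nra|lra]|].
  field_simplify; try nra.
  set (x := Cmod (v - w)) in *. assert (0 <= x) by apply Cmod_ge_0.
  assert (x * (m ^ 2 * eps) * (m / 2) <= x * (m ^ 2 * eps) * Cmod v)
    by (apply Rmult_le_compat_l; [apply Rmult_le_pos; [lra|apply Rmult_le_pos; nra]|lra]).
  assert (x * x <= x * (eps * m * m * m / 2)) by (apply Rmult_le_compat_l; lra).
  nra.
Qed.

Definition Ccont {U : UniformSpace} (h : U -> C) (x : U) : Prop :=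
  @continuous U C_UniformSpace h x.

Lemma Ccont_eps {U : UniformSpace} (h : U -> C) x :
  Ccont h x <-> forall eps, 0 < eps -> locally x (fun y => Cmod (h y - h x) < eps).
Proof.
  split.
  - intros H eps Heps. apply (H (fun w => Cmod (w - h x) < eps)).
    apply (@locally_le_locally_norm C_AbsRing C_NormedModule).
    exists (mkposreal eps Heps). intros w Hw. exact Hw.
  - intros H P HP.
    destruct (@locally_norm_le_locally C_AbsRing C_NormedModule (h x) P HP) as [e He].
    apply (filter_imp _ _ (fun y Hy => He (h y) Hy)), (H e (cond_pos e)).
Qed.

Lemma Ccont_const {U : UniformSpace} (c : C) (x : U) : Ccont (fun _ => c) x.
Proof. apply continuous_const. Qed.

Lemma Ccont_plus {U : UniformSpace} (p q : U -> C) x :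
  Ccont p x -> Ccont q x -> Ccont (fun y => p y + q y)%C x.
Proof.
  rewrite !Ccont_eps. intros Hp Hq eps Heps.
  apply (filter_imp (fun y => Cmod (p y - p x) < eps / 2 /\ Cmod (q y - q x) < eps / 2)).
  - intros y [H1 H2].
    replace (p y + q y - (p x + q x))%C with ((p y - p x) + (q y - q x))%C by ring.
    eapply Rle_lt_trans; [apply Cmod_triangle|lra].
  - apply filter_and; [apply Hp|apply Hq]; lra.
Qed.

Lemma Ccont_opp {U : UniformSpace} (p : U -> C) x : Ccont p x -> Ccont (fun y => - p y)%C x.
Proof.
  rewrite !Ccont_eps. intros Hp eps Heps.
  apply (filter_imp (fun y => Cmod (p y - p x) < eps)); [|exact (Hp eps Heps)].
  intros y Hy. replace (- p y - - p x)%C with (- (p y - p x))%C by ring. rewrite Cmod_opp. exact Hy.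
Qed.

Lemma Ccont_mult {U : UniformSpace} (p q : U -> C) x :
  Ccont p x -> Ccont q x -> Ccont (fun y => p y * q y)%C x.
Proof.
  rewrite !Ccont_eps. intros Hp Hq eps Heps.
  set (M := Cmod (p x) + Cmod (q x) + 2).
  assert (HM : 0 < M) by (unfold M; generalize (Cmod_ge_0 (p x)) (Cmod_ge_0 (q x)); lra).
  set (e := Rmin 1 (eps / M)).
  assert (He : 0 < e) by (apply Rmin_pos; [lra|apply Rdiv_lt_0_compat; lra]).
  assert (He1 : e <= 1) by apply Rmin_l.
  assert (He2 : e * M <= eps) by (apply Rle_trans with (eps / M * M);
    [apply Rmult_le_compat_r; [lra|apply Rmin_r]|right; field; lra]).
  apply (filter_imp (fun y => Cmod (p y - p x) < e /\ Cmod (q y - q x) < e)).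
  - intros y [H1 H2].
    replace (p y * q y - p x * q x)%C
      with ((p y - p x) * (q y - q x) + (p y - p x) * q x + p x * (q y - q x))%C by ring.
    eapply Rle_lt_trans; [apply Cmod_triangle|].
    eapply Rle_lt_trans; [apply Rplus_le_compat_r, Cmod_triangle|].
    rewrite !Cmod_mult.
    generalize (Cmod_ge_0 (p y - p x)) (Cmod_ge_0 (q y - q x)) (Cmod_ge_0 (p x)) (Cmod_ge_0 (q x)).
    intros. unfold M in He2. nra.
  - apply filter_and; [apply Hp|apply Hq]; exact He.
Qed.

Lemma Ccont_comp {U : UniformSpace} (q : U -> C) (h : C -> C) x :
  Ccont q x -> C_continuous h (q x) -> Ccont (fun y => h (q y)) x.
Proof.
  rewrite !Ccont_eps. intros Hq Hh eps Heps.
  destruct (Hh eps Heps) as [d [Hd Hd2]].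
  apply (filter_imp _ _ (fun y Hy => Hd2 (q y) Hy)), (Hq d Hd).
Qed.

Lemma Ccont_inv {U : UniformSpace} (q : U -> C) x :
  Ccont q x -> q x <> 0%C -> Ccont (fun y => / q y)%C x.
Proof.
  intros Hq Hx. apply (Ccont_comp q Cinv); [exact Hq|].
  eapply has_cderiv_C_continuous, has_cderiv_Cinv, Hx.
Qed.

Lemma Ccont_RtoC (s : R) : Ccont RtoC s.
Proof.
  apply Ccont_eps. intros eps Heps. exists (mkposreal eps Heps). intros y Hy.
  rewrite <- RtoC_minus, Cmod_R. exact Hy.
Qed.

Lemma Ccont_pow {U : UniformSpace} (q : U -> C) n x : Ccont q x -> Ccont (fun y => q y ^ n)%C x.
Proof.
  intros H. induction n as [|n IH]; [apply Ccont_const|].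
  apply (Ccont_mult q (fun y => q y ^ n)%C); assumption.
Qed.

Definition jointly_Ccont (F : R -> R -> C) (s t : R) : Prop :=
  Ccont (fun p : R * R => F (fst p) (snd p)) (s, t).

Lemma jointly_Ccont_snd (g : R -> C) s t : Ccont g t -> jointly_Ccont (fun _ => g) s t.
Proof. intros H. apply (continuous_comp snd g), H. apply continuous_snd. Qed.

Lemma jointly_Ccont_fst s t : jointly_Ccont (fun s _ => RtoC s) s t.
Proof. apply (continuous_comp fst RtoC). apply continuous_fst. apply Ccont_RtoC. Qed.

Lemma jointly_Ccont_section (F : R -> R -> C) s t : jointly_Ccont F s t -> Ccont (F s) t.
Proof.
  intros H. apply (continuous_comp (fun t => (s, t)) (fun p => F (fst p) (snd p))), H.
  intros P [eps HP]. exists eps. intros y Hy. apply HP. split; [apply ball_center|exact Hy].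
Qed.

Definition has_rderiv (g : R -> C) (s : R) (l : C) : Prop :=
  @is_derive R_AbsRing C_R_NormedModule g s l.

Lemma has_rderiv_eps (g : R -> C) s l :
  has_rderiv g s l <-> forall eps, 0 < eps -> exists delta, 0 < delta /\ forall t,
    Rabs (t - s) < delta -> Cmod (g t - g s - RtoC (t - s) * l)%C <= eps * Rabs (t - s).
Proof.
  assert (E : forall t, @norm R_AbsRing C_R_NormedModule
      (@minus C_R_NormedModule (@minus C_R_NormedModule (g t) (g s))
        (@scal R_AbsRing C_R_NormedModule (@minus (AbsRing_NormedModule R_AbsRing) t s) l))
      = Cmod (g t - g s - RtoC (t - s) * l)%C)
    by (intros t; rewrite <- Cmod_norm, scal_R_Cmult; reflexivity).
  unfold has_rderiv. rewrite is_derive_eps. split.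
  - intros H eps Heps. destruct (H (mkposreal eps Heps)) as [d Hd].
    exists d. split; [apply cond_pos|]. intros t Ht. rewrite <- E. exact (Hd t Ht).
  - intros H eps. destruct (H eps (cond_pos eps)) as [d [Hd0 Hd]].
    exists (mkposreal d Hd0). intros t Ht. rewrite E. exact (Hd t Ht).
Qed.

Lemma has_rderiv_ext (f g : R -> C) s l :
  (forall t, f t = g t) -> has_rderiv f s l -> has_rderiv g s l.
Proof. apply (@is_derive_ext R_AbsRing C_R_NormedModule). Qed.

Lemma has_rderiv_Ccont (h : R -> C) s l : has_rderiv h s l -> Ccont h s.
Proof. intros H. apply (@ex_derive_continuous R_AbsRing C_R_NormedModule). exists l. exact H. Qed.

Lemma has_rderiv_comp (f : C -> C) (q : R -> C) s dq l :
  has_rderiv q s dq -> has_cderiv f (q s) l -> has_rderiv (fun t => f (q t)) s (l * dq)%C.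
Proof.
  rewrite !has_rderiv_eps, has_cderiv_eps. intros Hq Hf eps Heps.
  set (A := Cmod dq + 1). set (B := Cmod l + 1).
  assert (HA : 0 < A) by (unfold A; generalize (Cmod_ge_0 dq); lra).
  assert (HB : 0 < B) by (unfold B; generalize (Cmod_ge_0 l); lra).
  destruct (Hq 1 Rlt_0_1) as [d1 [Hd1 H1]].
  destruct (Hq (eps / (2 * B))) as [d3 [Hd3 H3]]; [apply Rdiv_lt_0_compat; lra|].
  destruct (Hf (eps / (2 * A))) as [d2 [Hd2 H2]]; [apply Rdiv_lt_0_compat; lra|].
  exists (Rmin d1 (Rmin d3 (d2 / A))). split.
  { repeat apply Rmin_pos; try lra. apply Rdiv_lt_0_compat; lra. }
  intros t Ht.
  assert (Ht1 := Rlt_le_trans _ _ _ Ht (Rmin_l _ _)).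
  assert (Ht' := Rlt_le_trans _ _ _ Ht (Rmin_r _ _)).
  assert (Ht3 := Rlt_le_trans _ _ _ Ht' (Rmin_l _ _)).
  assert (Ht2 := Rlt_le_trans _ _ _ Ht' (Rmin_r _ _)).
  specialize (H1 t Ht1). specialize (H3 t Ht3).
  assert (Hlip : Cmod (q t - q s) <= A * Rabs (t - s)).
  { replace (q t - q s)%C with ((q t - q s - RtoC (t - s) * dq) + RtoC (t - s) * dq)%C by ring.
    eapply Rle_trans; [apply Cmod_triangle|]. rewrite Cmod_mult, Cmod_R.
    unfold A. nra. }
  assert (Hqt : Cmod (q t - q s) < d2).
  { apply Rle_lt_trans with (A * Rabs (t - s)); [exact Hlip|].
    apply Rmult_lt_reg_l with (/ A); [apply Rinv_0_lt_compat; lra|].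
    rewrite <- Rmult_assoc, Rinv_l, Rmult_1_l by lra. rewrite Rmult_comm. exact Ht2. }
  specialize (H2 (q t) Hqt).
  replace (f (q t) - f (q s) - RtoC (t - s) * (l * dq))%C with
    ((f (q t) - f (q s) - l * (q t - q s)) + l * (q t - q s - RtoC (t - s) * dq))%C by ring.
  eapply Rle_trans; [apply Cmod_triangle|]. rewrite Cmod_mult.
  assert (E1 : eps / (2 * A) * Cmod (q t - q s) <= eps / 2 * Rabs (t - s)).
  { apply Rle_trans with (eps / (2 * A) * (A * Rabs (t - s))).
    - apply Rmult_le_compat_l; [apply Rlt_le, Rdiv_lt_0_compat; lra|exact Hlip].
    - right. field. lra. }
  assert (E2 : Cmod l * Cmod (q t - q s - RtoC (t - s) * dq) <= eps / 2 * Rabs (t - s)).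
  { apply Rle_trans with (B * (eps / (2 * B) * Rabs (t - s))).
    - apply Rmult_le_compat; [apply Cmod_ge_0|apply Cmod_ge_0|unfold B; lra|exact H3].
    - right. field. lra. }
  lra.
Qed.

Lemma has_cderiv_affine (a b : C) z : has_cderiv (fun w => a + b * w)%C z b.
Proof.
  assert (H := has_cderiv_plus _ _ z _ _ (has_cderiv_const a z)
    (has_cderiv_mult _ _ z _ _ (has_cderiv_const b z) (has_cderiv_id z))).
  cbv beta in H. replace (RtoC 0 + (RtoC 0 * z + b * RtoC 1))%C with b in H by ring. exact H.
Qed.

Lemma has_rderiv_affine_comp (a b : C) (q : R -> C) s dq :
  has_rderiv q s dq -> has_rderiv (fun t => a + b * q t)%C s (b * dq)%C.
Proof. intros H. apply (has_rderiv_comp (fun w => a + b * w)%C), has_cderiv_affine. exact H. Qed.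

Lemma has_rderiv_Re (g : R -> C) s l : has_rderiv g s l -> is_derive (fun t => Re (g t)) s (Re l).
Proof.
  rewrite has_rderiv_eps. intros H.
  apply is_derive_Reals. intros eps Heps.
  destruct (H (eps / 2)) as [d [Hd Hd2]]; [lra|].
  exists (mkposreal d Hd). intros h Hh0 Hh.
  specialize (Hd2 (s + h)). replace (s + h - s) with h in Hd2 by ring.
  specialize (Hd2 Hh).
  assert (E : Rabs (Re (g (s + h)) - Re (g s) - h * Re l) <= eps / 2 * Rabs h).
  { eapply Rle_trans; [|exact Hd2]. eapply Rle_trans; [|apply re_le_Cmod].
    right. f_equal. unfold Re; simpl. ring. }
  replace ((Re (g (s + h)) - Re (g s)) / h - Re l)
    with ((Re (g (s + h)) - Re (g s) - h * Re l) / h) by (field; auto).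
  unfold Rdiv. rewrite Rabs_mult, Rabs_inv.
  apply Rle_lt_trans with (eps / 2 * Rabs h * / Rabs h).
  - apply Rmult_le_compat_r; [apply Rlt_le, Rinv_0_lt_compat, Rabs_pos_lt; auto|exact E].
  - field_simplify; [lra|]. apply Rabs_no_R0; auto.
Qed.

Lemma has_rderiv_pair (u v : R -> R) s du dv :
  is_derive u s du -> is_derive v s dv -> has_rderiv (fun t => (u t, v t)) s (du, dv).
Proof.
  rewrite has_rderiv_eps, !is_derive_eps. intros Hu Hv eps Heps.
  destruct (Hu (mkposreal (eps / 2) ltac:(lra))) as [d1 H1].
  destruct (Hv (mkposreal (eps / 2) ltac:(lra))) as [d2 H2].
  exists (Rmin d1 d2). split; [apply Rmin_pos; apply cond_pos|]. intros t Ht.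
  specialize (H1 t (Rlt_le_trans _ _ _ Ht (Rmin_l _ _))).
  specialize (H2 t (Rlt_le_trans _ _ _ Ht (Rmin_r _ _))).
  simpl in H1, H2. change (norm ?x) with (Rabs x) in H1, H2.
  change (scal ?a ?b) with (a * b) in H1, H2.
  do 2 change (minus ?a ?b) with (a - b) in H1, H2.
  eapply Rle_trans; [apply Cmod_le_Re_Im|]. simpl.
  replace (u t + - u s + - ((t - s) * du - 0 * dv)) with (u t - u s - (t - s) * du) by ring.
  replace (v t + - v s + - ((t - s) * dv + 0 * du)) with (v t - v s - (t - s) * dv) by ring.
  lra.
Qed.

Lemma has_rderiv_line (a b : C) s : has_rderiv (fun t => a + b * RtoC t)%C s b.
Proof.
  assert (H1 : has_rderiv RtoC s (RtoC 1)).
  { apply (has_rderiv_pair (fun t => t) (fun _ => 0)); auto_derive; auto. }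
  assert (H := has_rderiv_affine_comp a b _ s _ H1). rewrite Cmult_1_r in H. exact H.
Qed.

Definition CInt (f : R -> C) a b : C := @RInt C_R_CompleteNormedModule f a b.
Definition is_CInt (f : R -> C) a b (l : C) : Prop := @is_RInt C_R_NormedModule f a b l.
Definition ex_CInt (f : R -> C) a b : Prop := @ex_RInt C_R_NormedModule f a b.

Lemma CInt_correct (f : R -> C) a b : ex_CInt f a b -> is_CInt f a b (CInt f a b).
Proof. apply (@RInt_correct C_R_CompleteNormedModule). Qed.

Lemma is_CInt_unique (f : R -> C) a b l : is_CInt f a b l -> CInt f a b = l.
Proof. apply (@is_RInt_unique C_R_CompleteNormedModule). Qed.

Lemma ex_CInt_continuous (f : R -> C) a b : (forall t, Ccont f t) -> ex_CInt f a b.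
Proof. intros H. apply (@ex_RInt_continuous C_R_CompleteNormedModule). intros t _. apply H. Qed.

Lemma is_CInt_ext (f g : R -> C) a b l :
  (forall t, f t = g t) -> is_CInt f a b l -> is_CInt g a b l.
Proof. intros E. apply (@is_RInt_ext C_R_NormedModule f g). intros t _. apply E. Qed.

Lemma CInt_ext (f g : R -> C) a b : (forall t, f t = g t) -> CInt f a b = CInt g a b.
Proof. intros E. apply (@RInt_ext C_R_CompleteNormedModule). intros t _. apply E. Qed.

Lemma is_CInt_plus (f g : R -> C) a b l1 l2 : is_CInt f a b l1 -> is_CInt g a b l2 ->
  is_CInt (fun t => f t + g t)%C a b (l1 + l2)%C.
Proof. apply (@is_RInt_plus C_R_NormedModule). Qed.

Lemma is_CInt_minus (f g : R -> C) a b l1 l2 : is_CInt f a b l1 -> is_CInt g a b l2 ->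
  is_CInt (fun t => f t - g t)%C a b (l1 - l2)%C.
Proof. apply (@is_RInt_minus C_R_NormedModule). Qed.

Lemma is_CInt_const (c : C) a b : is_CInt (fun _ => c) a b (RtoC (b - a) * c)%C.
Proof. rewrite <- scal_R_Cmult. apply (@is_RInt_const C_R_NormedModule). Qed.

Lemma is_CInt_Re (f : R -> C) a b l : is_CInt f a b l -> is_RInt (fun t => Re (f t)) a b (Re l).
Proof.
  intros H. change (@is_RInt (prod_NormedModule _ R_NormedModule R_NormedModule) f a b l) in H.
  exact (is_RInt_fct_extend_fst _ _ _ _ H).
Qed.

Lemma is_CInt_Cmult (f : R -> C) a b l c :
  is_CInt f a b l -> is_CInt (fun t => c * f t)%C a b (c * l)%C.
Proof.
  unfold is_CInt. intros H.
  change (@is_RInt (prod_NormedModule _ R_NormedModule R_NormedModule) f a b l) in H.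
  change (@is_RInt (prod_NormedModule _ R_NormedModule R_NormedModule) (fun t => c * f t)%C a b (c * l)%C).
  assert (H1 := is_RInt_fct_extend_fst _ _ _ _ H).
  assert (H2 := is_RInt_fct_extend_snd _ _ _ _ H).
  destruct c as [c1 c2]. destruct l as [l1 l2].
  apply (is_RInt_fct_extend_pair (fun t => (c1, c2) * f t)%C a b).
  - eapply is_RInt_ext; [|apply (@is_RInt_minus R_NormedModule);
      [apply (@is_RInt_scal R_NormedModule _ _ _ c1 _ H1)|apply (@is_RInt_scal R_NormedModule _ _ _ c2 _ H2)]].
    intros x _. simpl. change (scal ?a ?b) with (a * b). unfold minus, plus, opp; simpl. ring.
  - eapply is_RInt_ext; [|apply (@is_RInt_plus R_NormedModule);
      [apply (@is_RInt_scal R_NormedModule _ _ _ c1 _ H2)|apply (@is_RInt_scal R_NormedModule _ _ _ c2 _ H1)]].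
    intros x _. simpl. change (scal ?a ?b) with (a * b). unfold plus; simpl. ring.
Qed.

Lemma CInt_Cmult (f : R -> C) a b c :
  ex_CInt f a b -> CInt (fun t => c * f t)%C a b = (c * CInt f a b)%C.
Proof. intros H. apply is_CInt_unique, is_CInt_Cmult, CInt_correct, H. Qed.

Lemma Cmod_is_CInt_le_const (f : R -> C) a b l M : a <= b ->
  (forall t, a <= t <= b -> Cmod (f t) <= M) -> is_CInt f a b l -> Cmod l <= (b - a) * M.
Proof.
  intros Hab Hb H. rewrite Cmod_norm.
  apply (@norm_RInt_le_const C_R_NormedModule f a b l M Hab); [|exact H].
  intros t Ht. rewrite <- Cmod_norm. auto.
Qed.

Lemma is_CInt_derive (h dh : R -> C) a b : a <= b ->
  (forall t, a <= t <= b -> has_rderiv h t (dh t)) -> (forall t, a <= t <= b -> Ccont dh t) ->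
  is_CInt dh a b (h b - h a)%C.
Proof.
  intros Hab H1 H2. apply (@is_RInt_derive C_R_CompleteNormedModule h dh a b);
    intros t Ht; rewrite Rmin_left, Rmax_right in Ht by exact Hab; [apply H1|apply H2]; exact Ht.
Qed.

Lemma has_rderiv_0_eq (h : R -> C) a b : a <= b ->
  (forall t, a <= t <= b -> has_rderiv h t (RtoC 0)) -> h a = h b.
Proof.
  intros Hab H.
  assert (E := is_CInt_derive h (fun _ => RtoC 0) a b Hab H (fun t _ => Ccont_const _ t)).
  apply is_CInt_unique in E. rewrite (is_CInt_unique _ _ _ _ (is_CInt_const _ a b)) in E.
  apply (f_equal (fun x => x + h a)%C) in E. ring_simplify in E. rewrite E. ring.
Qed.

(** * Differentiation under the integral sign *)

Section Parametric_integral.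

Variables (F D : R -> R -> C) (a b s0 r : R).
Hypothesis r_pos : 0 < r.
Hypothesis F_deriv : forall s t, Rabs (s - s0) < r -> has_rderiv (fun u => F u t) s (D s t).
Hypothesis D_cont : forall t, jointly_Ccont D s0 t.
Hypothesis F_cont : forall s t, Rabs (s - s0) < r -> Ccont (F s) t.

Lemma is_derive_Re_CInt_param :
  is_derive (fun s => Re (CInt (F s) a b)) s0 (Re (CInt (D s0) a b)).
Proof.
  assert (HDer : forall s t, Rabs (s - s0) < r -> Derive (fun u => Re (F u t)) s = Re (D s t))
    by (intros s t Hs; apply is_derive_unique, has_rderiv_Re, F_deriv, Hs).
  assert (HReI : forall s, Rabs (s - s0) < r ->
      is_RInt (fun t => Re (F s t)) a b (Re (CInt (F s) a b)))
    by (intros s Hs; apply is_CInt_Re, CInt_correct, ex_CInt_continuous;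
        intros t; apply F_cont, Hs).
  assert (HD0 : forall t, Ccont (D s0) t) by (intros t; apply jointly_Ccont_section, D_cont).
  apply is_derive_ext_loc with (fun s => RInt (fun t => Re (F s t)) a b).
  { exists (mkposreal r r_pos). intros s Hs. apply is_RInt_unique, HReI, Hs. }
  replace (Re (CInt (D s0) a b)) with (RInt (fun t => Derive (fun u => Re (F u t)) s0) a b).
  - apply is_derive_RInt_param.
    + exists (mkposreal r r_pos). intros s Hs t _. eexists. apply has_rderiv_Re, F_deriv, Hs.
    + intros t _. apply continuity_2d_pt_ext_loc with (fun u v => Re (D u v)).
      * exists (mkposreal r r_pos). intros u v Hu _. symmetry. apply HDer, Hu.
      * apply continuity_2d_pt_filterlim.
        apply (@continuous_comp (prod_UniformSpace R_UniformSpace R_UniformSpace)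
                 C_UniformSpace R_UniformSpace (fun p : R * R => D (fst p) (snd p)) Re);
          [apply D_cont|].
        intros P [e HP]. exists e. intros y [Hy _]. apply HP, Hy.
    + exists (mkposreal r r_pos). intros s Hs. eexists. apply HReI, Hs.
  - apply is_RInt_unique. eapply is_RInt_ext; [|apply is_CInt_Re, CInt_correct].
    + intros t _. symmetry. apply HDer. rewrite Rminus_diag, Rabs_R0. exact r_pos.
    + apply ex_CInt_continuous, HD0.
Qed.

End Parametric_integral.

Lemma has_rderiv_CInt_param (F D : R -> R -> C) a b s0 r : 0 < r ->
  (forall s t, Rabs (s - s0) < r -> has_rderiv (fun u => F u t) s (D s t)) ->
  (forall t, jointly_Ccont D s0 t) ->
  (forall s t, Rabs (s - s0) < r -> Ccont (F s) t) ->
  has_rderiv (fun s => CInt (F s) a b) s0 (CInt (D s0) a b).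
Proof.
  intros Hr HF HD HC.
  assert (Re_mCi : forall x : C, Re (- Ci * x)%C = Im x)
    by (intros [x1 x2]; unfold Re, Im, Ci, Cmult, Copp; simpl; ring).
  assert (HRe := is_derive_Re_CInt_param F D a b s0 r Hr HF HD HC).
  assert (HIm : is_derive (fun s => Re (CInt (fun t => - Ci * F s t) a b)%C) s0
                  (Re (CInt (fun t => - Ci * D s0 t) a b)%C)).
  { apply (is_derive_Re_CInt_param (fun s t => - Ci * F s t)%C (fun s t => - Ci * D s t)%C _ _ _ r Hr).
    - intros s t Hs. apply (has_rderiv_ext (fun u => 0 + - Ci * F u t)%C); [intros; ring|].
      apply has_rderiv_affine_comp, HF, Hs.
    - intros t. apply Ccont_mult; [apply Ccont_const|apply HD].
    - intros s t Hs. apply Ccont_mult; [apply Ccont_const|apply HC, Hs]. }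
  rewrite CInt_Cmult, Re_mCi in HIm
    by (apply ex_CInt_continuous; intros t; apply jointly_Ccont_section, HD).
  apply is_derive_ext_loc with (fun s => (Re (CInt (F s) a b), Re (CInt (fun t => - Ci * F s t) a b)%C)).
  - exists (mkposreal r Hr). intros s Hs. rewrite CInt_Cmult, Re_mCi.
    + destruct (CInt (F s) a b); reflexivity.
    + apply ex_CInt_continuous. intros t. apply HC, Hs.
  - replace (CInt (D s0) a b) with (Re (CInt (D s0) a b), Im (CInt (D s0) a b))
      by (destruct (CInt (D s0) a b); reflexivity).
    apply has_rderiv_pair; assumption.
Qed.

Lemma has_cderiv_CInt_param (F : C -> R -> C) (D : R -> C) a b z r K :
  a <= b -> 0 < r -> 0 <= K ->
  (forall w, Cmod (w - z) < r -> ex_CInt (F w) a b) -> ex_CInt D a b ->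
  (forall w t, Cmod (w - z) < r -> a <= t <= b ->
     Cmod (F w t - F z t - (w - z) * D t)%C <= K * Cmod (w - z) ^ 2) ->
  has_cderiv (fun w => CInt (F w) a b) z (CInt D a b).
Proof.
  intros Hab Hr HK HF HD Hrem. apply has_cderiv_eps. intros eps Heps.
  set (L := (b - a) * K + 1).
  assert (HL : 0 < L) by (unfold L; nra).
  exists (Rmin r (eps / L)). split; [apply Rmin_pos; [lra|apply Rdiv_lt_0_compat; lra]|].
  intros w Hw.
  assert (Hwr := Rlt_le_trans _ _ _ Hw (Rmin_l _ _)).
  assert (Hwe := Rlt_le_trans _ _ _ Hw (Rmin_r _ _)).
  assert (Hz : Cmod (z - z) < r) by (replace (z - z)%C with (RtoC 0) by ring; rewrite Cmod_0; exact Hr).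
  assert (HI := is_CInt_minus _ _ _ _ _ _
    (is_CInt_minus _ _ _ _ _ _ (CInt_correct _ _ _ (HF w Hwr)) (CInt_correct _ _ _ (HF z Hz)))
    (is_CInt_Cmult _ _ _ _ (w - z)%C (CInt_correct _ _ _ HD))).
  rewrite Cmult_comm. set (h := Cmod (w - z)) in *.
  assert (Hh : 0 <= h) by apply Cmod_ge_0.
  apply Rle_trans with ((b - a) * (K * h ^ 2)).
  - refine (Cmod_is_CInt_le_const _ a b _ _ Hab _ HI).
    intros t Ht. apply Hrem; assumption.
  - assert (h * L <= eps) by (apply Rmult_le_reg_r with (/ L); [apply Rinv_0_lt_compat, HL|];
      rewrite Rmult_assoc, Rinv_r, Rmult_1_r by lra; apply Rlt_le, Hwe).
    unfold L in *. nra.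
Qed.

(** * Cauchy integrals over the circle of radius 1/2 *)

Definition circ (t : R) : C := (/2 * cos t, /2 * sin t).

Lemma has_rderiv_circ t : has_rderiv circ t (Ci * circ t)%C.
Proof.
  replace (Ci * circ t)%C with (/2 * - sin t, /2 * cos t)
    by (unfold Ci, circ, Cmult; simpl; f_equal; ring).
  apply has_rderiv_pair; auto_derive; auto; ring.
Qed.

Lemma Ccont_circ t : Ccont circ t.
Proof. eapply has_rderiv_Ccont, has_rderiv_circ. Qed.

Lemma Cmod_circ t : Cmod (circ t) = /2.
Proof.
  unfold Cmod, circ; simpl.
  replace (/ 2 * cos t * (/ 2 * cos t * 1) + / 2 * sin t * (/ 2 * sin t * 1))
    with ((/2) ^ 2 * ((sin t)² + (cos t)²)) by (unfold Rsqr; ring).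
  rewrite sin2_cos2, Rmult_1_r. apply sqrt_pow2. lra.
Qed.

Lemma circ_2PI : circ (2 * PI) = circ 0.
Proof. unfold circ. rewrite cos_2PI, sin_2PI, cos_0, sin_0. reflexivity. Qed.

Lemma circ_sub_ge t z : Cmod z < /2 -> /2 - Cmod z <= Cmod (circ t - z).
Proof. intros H. generalize (Cmod_triangle_rev (circ t) z). rewrite Cmod_circ. lra. Qed.

Lemma circ_sub_neq_0 t z : Cmod z < /2 -> (circ t - z)%C <> 0%C.
Proof. intros H. apply Cmod_gt_0. generalize (circ_sub_ge t z H). lra. Qed.

Lemma circ_sub_near_ge t z w : Cmod z < /2 -> Cmod (w - z) < (/2 - Cmod z) / 2 ->
  Cmod w < /2 /\ (/2 - Cmod z) / 2 <= Cmod (circ t - w).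
Proof.
  intros Hz Hw. generalize (Cmod_triangle (w - z) z). replace (w - z + z)%C with w by ring.
  intros Htri. assert (Hw2 : Cmod w < /2) by lra.
  split; [exact Hw2|]. generalize (circ_sub_ge t w Hw2). lra.
Qed.

Lemma two_PI_pos : 0 < 2 * PI.
Proof. generalize PI_RGT_0. lra. Qed.

Lemma circ_in_disk t : unit_disk (circ t).
Proof. unfold unit_disk. rewrite Cmod_circ. lra. Qed.

Lemma RtoC_2PI_neq_0 : RtoC (2 * PI) <> 0%C.
Proof. apply RtoC_neq_0. generalize two_PI_pos. lra. Qed.

(* With a t = f (circ t) * circ t this is -i times the contour integral of f(w) / (w - z)^n,
   because circ' = i circ. *)
Definition cauchy_int (a : R -> C) (n : nat) (z : C) : C :=
  CInt (fun t => a t / (circ t - z) ^ n)%C 0 (2 * PI).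

Section Cauchy_integrals.

Variables (a : R -> C) (M : R).
Hypothesis a_cont : forall t, Ccont a t.
Hypothesis a_bounded : forall t, Cmod (a t) <= M.

Lemma ex_cauchy_int n z : Cmod z < /2 -> ex_CInt (fun t => a t / (circ t - z) ^ n)%C 0 (2 * PI).
Proof.
  intros Hz. apply ex_CInt_continuous. intros t.
  apply Ccont_mult; [apply a_cont|]. apply Ccont_inv.
  - apply Ccont_pow, Ccont_plus; [apply Ccont_circ|apply Ccont_const].
  - apply Cpow_nz, circ_sub_neq_0, Hz.
Qed.

Lemma is_cauchy_int n z : Cmod z < /2 ->
  is_CInt (fun t => a t / (circ t - z) ^ n)%C 0 (2 * PI) (cauchy_int a n z).
Proof. intros Hz. apply CInt_correct, ex_cauchy_int, Hz. Qed.

Lemma has_cderiv_cauchy_int1 z : Cmod z < /2 ->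
  has_cderiv (cauchy_int a 1) z (cauchy_int a 2 z).
Proof.
  intros Hz. set (d := /2 - Cmod z). assert (Hd : 0 < d) by (unfold d; lra).
  assert (HM : 0 <= M) by (apply Rle_trans with (Cmod (a 0)); [apply Cmod_ge_0|apply a_bounded]).
  assert (HP : 0 < d ^ 2 * (d / 2)) by (apply Rmult_lt_0_compat; [apply pow_lt|]; lra).
  apply (has_cderiv_CInt_param _ _ 0 (2 * PI) z (d / 2) (M / (d ^ 2 * (d / 2))));
    [generalize two_PI_pos; lra|lra|apply Rmult_le_pos, Rlt_le, Rinv_0_lt_compat; lra| | |].
  - intros w Hw. apply ex_cauchy_int, (circ_sub_near_ge 0 z w Hz Hw).
  - apply ex_cauchy_int, Hz.
  - intros w t Hw _. destruct (circ_sub_near_ge t z w Hz Hw) as [Hwz Hv].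
    assert (Hu := circ_sub_ge t z Hz). fold d in Hu, Hv.
    replace (a t / (circ t - w) ^ 1 - a t / (circ t - z) ^ 1 - (w - z) * (a t / (circ t - z) ^ 2))%C
      with (a t * (w - z) ^ 2 / ((circ t - z) ^ 2 * (circ t - w)))%C
      by (field; split; apply circ_sub_neq_0; assumption).
    replace (M / (d ^ 2 * (d / 2)) * Cmod (w - z) ^ 2) with (M * Cmod (w - z) ^ 2 / (d ^ 2 * (d / 2)))
      by (field; lra).
    apply Cmod_div_le; [exact HP| |].
    + rewrite Cmod_mult, Cmod_pow. apply Rmult_le_compat_r; [apply pow_le, Cmod_ge_0|apply a_bounded].
    + rewrite Cmod_mult, Cmod_pow.
      apply Rmult_le_compat; [apply pow_le; lra|lra|apply pow_incr; lra|exact Hv].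
Qed.

Lemma has_cderiv_cauchy_int2 z : Cmod z < /2 ->
  has_cderiv (cauchy_int a 2) z (2 * cauchy_int a 3 z)%C.
Proof.
  intros Hz. set (d := /2 - Cmod z). assert (Hd : 0 < d) by (unfold d; lra).
  assert (HM : 0 <= M) by (apply Rle_trans with (Cmod (a 0)); [apply Cmod_ge_0|apply a_bounded]).
  assert (HP : 0 < d ^ 3 * (d / 2) ^ 2) by (apply Rmult_lt_0_compat; apply pow_lt; lra).
  unfold cauchy_int at 2. rewrite <- CInt_Cmult by (apply ex_cauchy_int, Hz).
  apply (has_cderiv_CInt_param _ _ 0 (2 * PI) z (d / 2) (4 * M / (d ^ 3 * (d / 2) ^ 2)));
    [generalize two_PI_pos; lra|lra|apply Rmult_le_pos, Rlt_le, Rinv_0_lt_compat; lra| | |].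
  - intros w Hw. apply ex_cauchy_int, (circ_sub_near_ge 0 z w Hz Hw).
  - apply ex_CInt_continuous. intros t. apply Ccont_mult; [apply Ccont_const|].
    apply Ccont_mult; [apply a_cont|]. apply Ccont_inv.
    + apply Ccont_pow, Ccont_plus; [apply Ccont_circ|apply Ccont_const].
    + apply Cpow_nz, circ_sub_neq_0, Hz.
  - intros w t Hw _. destruct (circ_sub_near_ge t z w Hz Hw) as [Hwz Hv].
    assert (Hu := circ_sub_ge t z Hz). fold d in Hu, Hv.
    replace (a t / (circ t - w) ^ 2 - a t / (circ t - z) ^ 2 - (w - z) * (2 * (a t / (circ t - z) ^ 3)))%C
      with (a t * (w - z) ^ 2 * (3 * (circ t - z) - 2 * (w - z)) / ((circ t - z) ^ 3 * (circ t - w) ^ 2))%C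
      by (field; split; apply circ_sub_neq_0; assumption).
    replace (4 * M / (d ^ 3 * (d / 2) ^ 2) * Cmod (w - z) ^ 2)
      with (M * Cmod (w - z) ^ 2 * 4 / (d ^ 3 * (d / 2) ^ 2)) by (field; lra).
    apply Cmod_div_le; [exact HP| |].
    + rewrite !Cmod_mult, Cmod_pow.
      apply Rmult_le_compat; [apply Rmult_le_pos; [apply Cmod_ge_0|apply pow_le, Cmod_ge_0]|apply Cmod_ge_0| |].
      * apply Rmult_le_compat_r; [apply pow_le, Cmod_ge_0|apply a_bounded].
      * assert (Hx : Cmod (circ t - z) <= 1).
        { generalize (Cmod_triangle (circ t) (- z)). rewrite Cmod_opp, Cmod_circ. intros H.
          unfold Cminus. lra. }
        eapply Rle_trans; [apply Cmod_triangle|]. rewrite Cmod_opp, !Cmod_mult, !Cmod_RtoC_nonneg by lra.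
        unfold d in Hw. generalize (Cmod_ge_0 z). lra.
    + rewrite Cmod_mult, !Cmod_pow.
      apply Rmult_le_compat; try (apply pow_le; lra); apply pow_incr; lra.
Qed.

End Cauchy_integrals.

Lemma is_CInt_closed_path (f : C -> C) (f1 p dp : R -> C) a b : a <= b ->
  (forall t, a <= t <= b -> has_cderiv f (p t) (f1 t)) ->
  (forall t, a <= t <= b -> has_rderiv p t (dp t)) ->
  (forall t, a <= t <= b -> Ccont (fun t => f1 t * dp t)%C t) ->
  p a = p b -> is_CInt (fun t => f1 t * dp t)%C a b (RtoC 0).
Proof.
  intros Hab Hf Hp Hc Hper.
  replace (RtoC 0) with (f (p b) - f (p a))%C by (rewrite Hper; ring).
  apply (is_CInt_derive (fun t => f (p t))); [exact Hab| |exact Hc].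
  intros t Ht. apply has_rderiv_comp; [apply Hp|apply Hf]; exact Ht.
Qed.

Lemma Copp_Ci_mult_Ci : (- Ci * Ci)%C = RtoC 1.
Proof. unfold Ci, Cmult, Copp, RtoC; simpl. f_equal; ring. Qed.

Lemma is_CInt_circ : is_CInt circ 0 (2 * PI) (RtoC 0).
Proof.
  apply (is_CInt_ext (fun t => - Ci * (Ci * circ t))%C); [intros t; rewrite Cmult_assoc, Copp_Ci_mult_Ci; ring|].
  apply (is_CInt_closed_path (fun w => 0 + - Ci * w)%C _ circ); [generalize two_PI_pos; lra| | | |].
  - intros t _. apply has_cderiv_affine.
  - intros t _. apply has_rderiv_circ.
  - intros t _. apply Ccont_mult; [apply Ccont_const|apply Ccont_mult; [apply Ccont_const|apply Ccont_circ]].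
  - symmetry. apply circ_2PI.
Qed.

Lemma cauchy_int_circ2 z : Cmod z < /2 -> cauchy_int circ 2 z = RtoC 0.
Proof.
  intros Hz. apply is_CInt_unique.
  assert (Hnz := fun t => circ_sub_neq_0 t z Hz).
  apply (is_CInt_ext (fun t => (- / ((circ t - z) * (circ t - z)) * Ci) * (Ci * circ t))%C).
  { intros t. transitivity ((- Ci * Ci) * (circ t / (circ t - z) ^ 2))%C.
    - field. apply Hnz.
    - rewrite Copp_Ci_mult_Ci. ring. }
  apply (is_CInt_closed_path (fun w => 0 + Ci * / (w - z))%C _ circ); [generalize two_PI_pos; lra| | | |].
  - intros t _. apply (has_cderiv_comp (fun u => 0 + Ci * u)%C (fun w => / (w - z))%C).
    + apply has_cderiv_affine.
    + replace (- / ((circ t - z) * (circ t - z)))%C with ((RtoC 1 - RtoC 0) * - / ((circ t - z) * (circ t - z)))%C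
        by ring.
      apply (has_cderiv_comp Cinv (fun w => w - z)%C), has_cderiv_minus;
        [apply has_cderiv_Cinv, Hnz|apply has_cderiv_id|apply has_cderiv_const].
  - intros t _. apply has_rderiv_circ.
  - intros t _.
    assert (Hc : Ccont (fun t => circ t - z)%C t) by (apply Ccont_plus; [apply Ccont_circ|apply Ccont_const]).
    apply (Ccont_mult (fun t => - / ((circ t - z) * (circ t - z)) * Ci)%C (fun t => Ci * circ t)%C).
    + apply (Ccont_mult _ (fun _ => Ci)); [|apply Ccont_const].
      apply Ccont_opp, Ccont_inv; [apply Ccont_mult; exact Hc|apply Cmult_neq_0; apply Hnz].
    + apply (Ccont_mult (fun _ => Ci)); [apply Ccont_const|apply Ccont_circ].
  - symmetry. apply circ_2PI.
Qed.

(* Winding number: the z-derivative cauchy_int circ 2 vanishes, and at z = 0 the integrand is 1. *)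
Lemma cauchy_int_circ1 z : Cmod z < /2 -> cauchy_int circ 1 z = RtoC (2 * PI).
Proof.
  intros Hz.
  assert (Hseg : forall s, 0 <= s <= 1 -> Cmod (0 + z * RtoC s)%C < /2).
  { intros s Hs. rewrite Cplus_0_l, Cmod_mult, Cmod_RtoC_nonneg by lra.
    generalize (Cmod_ge_0 z). nra. }
  assert (E : cauchy_int circ 1 (0 + z * RtoC 0)%C = cauchy_int circ 1 (0 + z * RtoC 1)%C).
  { apply (has_rderiv_0_eq (fun s => cauchy_int circ 1 (0 + z * RtoC s)%C)); [lra|].
    intros s Hs.
    assert (H := has_rderiv_comp (cauchy_int circ 1) _ s _ _ (has_rderiv_line 0 z s)
      (has_cderiv_cauchy_int1 circ (/2) Ccont_circ (fun t => Req_le _ _ (Cmod_circ t)) _ (Hseg s Hs))).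
    rewrite cauchy_int_circ2, Cmult_0_l in H by apply Hseg, Hs. exact H. }
  replace (0 + z * RtoC 1)%C with z in E by ring. rewrite <- E.
  replace (0 + z * RtoC 0)%C with (RtoC 0) by ring.
  apply is_CInt_unique.
  apply (is_CInt_ext (fun _ => RtoC 1)).
  - intros t. assert (H := circ_sub_neq_0 t 0). rewrite Cmod_0, Cminus_0_r in H.
    rewrite Cminus_0_r. field. apply H. lra.
  - replace (RtoC (2 * PI)) with (RtoC (2 * PI - 0) * RtoC 1)%C by (rewrite Rminus_0_r; ring).
    apply is_CInt_const.
Qed.

Definition circ_homotopy (z : C) (s t : R) : C := (z + (circ t - z) * RtoC s)%C.

(* The slack around [0, 1] in s is needed to differentiate under the integral in s. *)
Lemma circ_homotopy_in_disk z s t : Cmod z < /3 -> -1/10 < s < 11/10 ->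
  Cmod (circ_homotopy z s t) < 1.
Proof.
  intros Hz Hs. unfold circ_homotopy.
  replace (z + (circ t - z) * RtoC s)%C with (RtoC (1 - s) * z + RtoC s * circ t)%C
    by (rewrite RtoC_minus; ring).
  eapply Rle_lt_trans; [apply Cmod_triangle|]. rewrite !Cmod_mult, !Cmod_R, Cmod_circ.
  assert (Rabs (1 - s) <= 11/10) by (apply Rabs_le; lra).
  assert (Rabs s <= 11/10) by (apply Rabs_le; lra).
  assert (Rabs (1 - s) * Cmod z <= 11/10 * /3)
    by (apply Rmult_le_compat; [apply Rabs_pos|apply Cmod_ge_0|lra|lra]).
  lra.
Qed.

Lemma Ccont_circ_homotopy z s t : Ccont (circ_homotopy z s) t.
Proof.
  apply Ccont_plus; [apply Ccont_const|].
  apply Ccont_mult; [apply Ccont_plus; [apply Ccont_circ|apply Ccont_const]|apply Ccont_const].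
Qed.

Lemma jointly_Ccont_circ_homotopy z s t : jointly_Ccont (circ_homotopy z) s t.
Proof.
  apply Ccont_plus; [apply Ccont_const|].
  apply Ccont_mult; [|apply jointly_Ccont_fst].
  apply Ccont_plus; [apply (jointly_Ccont_snd circ), Ccont_circ|apply Ccont_const].
Qed.

Section Cauchy_formula.

Variables (f f1 : C -> C) (z : C).
Hypothesis f_deriv : forall w, Cmod w < 1 -> has_cderiv f w (f1 w).
Hypothesis f1_cont : forall w, Cmod w < 1 -> C_continuous f1 w.
Hypothesis z_small : Cmod z < /3.

Lemma Cmod_z_lt_half : Cmod z < /2.
Proof. lra. Qed.

(* For s <> 0 the integrand is 1 / (i s) times the t-derivative of f (circ_homotopy z s t),
   and the path t |-> circ_homotopy z s t is closed. *)
Lemma CInt_f1_homotopy_0 s : 0 <= s <= 1 ->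
  CInt (fun t => f1 (circ_homotopy z s t) * circ t)%C 0 (2 * PI) = RtoC 0.
Proof.
  intros Hs. apply is_CInt_unique. destruct (Req_dec s 0) as [->|Hs0].
  - apply (is_CInt_ext (fun t => f1 z * circ t)%C).
    + intros t. unfold circ_homotopy. do 2 f_equal. ring.
    + rewrite <- (Cmult_0_r (f1 z)). apply is_CInt_Cmult, is_CInt_circ.
  - rewrite <- (Cmult_0_r (/ (RtoC s * Ci))).
    apply (is_CInt_ext (fun t => / (RtoC s * Ci) * (f1 (circ_homotopy z s t) * (RtoC s * (Ci * circ t))))%C);
      [intros t; field; split; [apply Ci_nz|apply RtoC_neq_0, Hs0]|].
    apply is_CInt_Cmult.
    apply (is_CInt_closed_path f _ (circ_homotopy z s)); [generalize two_PI_pos; lra| | | |].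
    + intros t _. apply f_deriv, circ_homotopy_in_disk; [exact z_small|lra].
    + intros t _. apply (has_rderiv_ext (fun t => (z - z * RtoC s) + RtoC s * circ t)%C);
        [intros u; unfold circ_homotopy; ring|].
      apply has_rderiv_affine_comp, has_rderiv_circ.
    + intros t _. apply Ccont_mult.
      * apply Ccont_comp; [apply Ccont_circ_homotopy|apply f1_cont, circ_homotopy_in_disk; lra].
      * apply Ccont_mult, Ccont_mult; try apply Ccont_const. apply Ccont_circ.
    + unfold circ_homotopy. rewrite circ_2PI. reflexivity.
Qed.

Lemma has_rderiv_homotopy_int s : 0 <= s <= 1 ->
  has_rderiv (fun s => CInt (fun t => circ t / (circ t - z) * f (circ_homotopy z s t)) 0 (2 * PI))%C s
    (CInt (fun t => f1 (circ_homotopy z s t) * circ t) 0 (2 * PI))%C.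
Proof.
  intros Hs.
  assert (Hnz := fun t => circ_sub_neq_0 t z Cmod_z_lt_half).
  assert (Hin : forall s' t, Rabs (s' - s) < 1/10 -> Cmod (circ_homotopy z s' t) < 1)
    by (intros s' t Hs'; apply Rabs_def2 in Hs'; apply circ_homotopy_in_disk; [exact z_small|lra]).
  apply (has_rderiv_CInt_param (fun s t => circ t / (circ t - z) * f (circ_homotopy z s t))%C
    (fun s t => f1 (circ_homotopy z s t) * circ t)%C 0 (2 * PI) s (1/10)); [lra| | |].
  - intros s' t Hs'.
    replace (f1 (circ_homotopy z s' t) * circ t)%C
      with (circ t / (circ t - z) * (f1 (circ_homotopy z s' t) * (circ t - z)))%C
      by (field; apply Hnz).
    apply (has_rderiv_ext (fun u => 0 + circ t / (circ t - z) * f (circ_homotopy z u t))%C);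
      [intros u; ring|].
    apply has_rderiv_affine_comp, (has_rderiv_comp f (fun u => z + (circ t - z) * RtoC u)%C).
    + apply has_rderiv_line.
    + apply f_deriv, Hin, Hs'.
  - intros t.
    apply (Ccont_mult (fun p : R * R => f1 (circ_homotopy z (fst p) (snd p))) (fun p => circ (snd p))).
    + apply (Ccont_comp (fun p : R * R => circ_homotopy z (fst p) (snd p))).
      * apply jointly_Ccont_circ_homotopy.
      * apply f1_cont, Hin. rewrite Rminus_diag, Rabs_R0. lra.
    + apply (jointly_Ccont_snd circ), Ccont_circ.
  - intros s' t Hs'.
    apply (Ccont_mult (fun t => circ t / (circ t - z))%C (fun t => f (circ_homotopy z s' t))).
    + apply (Ccont_mult circ (fun t => / (circ t - z))%C); [apply Ccont_circ|].
      apply Ccont_inv; [|apply Hnz]. apply Ccont_plus; [apply Ccont_circ|apply Ccont_const].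
    + apply Ccont_comp; [apply Ccont_circ_homotopy|].
      apply has_cderiv_C_continuous with (f1 (circ_homotopy z s' t)), f_deriv, Hin, Hs'.
Qed.

Lemma cauchy_formula :
  cauchy_int (fun t => f (circ t) * circ t)%C 1 z = (RtoC (2 * PI) * f z)%C.
Proof.
  assert (Hnz := fun t => circ_sub_neq_0 t z Cmod_z_lt_half).
  assert (Hd : forall s, 0 <= s <= 1 -> has_rderiv
      (fun s => CInt (fun t => circ t / (circ t - z) * f (circ_homotopy z s t)) 0 (2 * PI))%C s (RtoC 0)).
  { intros s Hs. assert (H := has_rderiv_homotopy_int s Hs).
    rewrite CInt_f1_homotopy_0 in H by exact Hs. exact H. }
  assert (E := has_rderiv_0_eq _ 0 1 ltac:(lra) Hd).
  unfold circ_homotopy in E.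
  rewrite <- (cauchy_int_circ1 z Cmod_z_lt_half), Cmult_comm.
  unfold cauchy_int. rewrite <- CInt_Cmult by (apply ex_cauchy_int; [apply Ccont_circ|exact Cmod_z_lt_half]).
  transitivity (CInt (fun t => circ t / (circ t - z) * f (z + (circ t - z) * RtoC 1)) 0 (2 * PI))%C.
  - apply CInt_ext. intros t. replace (z + (circ t - z) * RtoC 1)%C with (circ t) by ring.
    field. apply Hnz.
  - rewrite <- E. apply CInt_ext. intros t.
    replace (z + (circ t - z) * RtoC 0)%C with z by ring. field. apply Hnz.
Qed.

End Cauchy_formula.

(** * Growth bounds from derivative bounds *)

Lemma Cmod_as_Re (x : C) : exists u, Cmod u <= 1 /\ Re (u * x)%C = Cmod x.
Proof.
  destruct (Ceq_dec x 0) as [->|Hx].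
  - exists (RtoC 0). rewrite Cmod_0, Cmult_0_l. split; [lra|reflexivity].
  - assert (Hm : 0 < Cmod x) by (apply Cmod_gt_0, Hx).
    assert (Hm' : RtoC (Cmod x) <> 0%C) by (apply RtoC_neq_0; lra).
    exists (Cconj x / RtoC (Cmod x))%C. split.
    + rewrite Cmod_div, Cmod_conj, Cmod_RtoC_nonneg by (try exact Hm'; lra).
      right. field. lra.
    + replace (Cconj x / RtoC (Cmod x) * x)%C with ((x * Cconj x) / RtoC (Cmod x))%C by (unfold Cdiv; ring).
      rewrite <- Cmod2_conj, RtoC_pow. replace (RtoC (Cmod x) ^ 2 / RtoC (Cmod x))%C
        with (RtoC (Cmod x)) by (field; exact Hm').
      apply re_RtoC.
Qed.

(* Rotate the increment onto the real axis and apply the real mean value theorem to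
   Re (u psi) - m. *)
Lemma Cmod_increment_le (psi dpsi : R -> C) (m dm : R -> R) a b : a <= b ->
  (forall t, a <= t <= b -> has_rderiv psi t (dpsi t)) ->
  (forall t, a <= t <= b -> is_derive m t (dm t)) ->
  (forall t, a <= t <= b -> Cmod (dpsi t) <= dm t) ->
  Cmod (psi b - psi a) <= m b - m a.
Proof.
  intros Hab Hpsi Hm Hb.
  destruct (Cmod_as_Re (psi b - psi a)%C) as [u [Hu Hre]].
  assert (Hq : forall t, a <= t <= b ->
      is_derive (fun t => Re (u * psi t)%C - m t) t (Re (u * dpsi t)%C - dm t)).
  { intros t Ht. apply (@is_derive_minus R_AbsRing R_NormedModule (fun t => Re (u * psi t)%C) m);
      [|apply Hm, Ht].
    apply has_rderiv_Re. apply (has_rderiv_ext (fun t => 0 + u * psi t)%C); [intros; ring|].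
    apply has_rderiv_affine_comp, Hpsi, Ht. }
  destruct (MVT_gen (fun t => Re (u * psi t)%C - m t) a b (fun t => Re (u * dpsi t)%C - dm t))
    as [c [Hc Hmvt]]; rewrite Rmin_left, Rmax_right in * by exact Hab.
  - intros t Ht. apply Hq. lra.
  - intros t Ht. apply continuity_pt_filterlim,
      (@ex_derive_continuous R_AbsRing R_NormedModule (fun t => Re (u * psi t)%C - m t)).
    eexists. apply Hq, Ht.
  - assert (Hdc : Re (u * dpsi c)%C <= dm c).
    { eapply Rle_trans; [apply Rle_abs|]. eapply Rle_trans; [apply re_le_Cmod|].
      rewrite Cmod_mult. apply Rle_trans with (1 * Cmod (dpsi c)); [|rewrite Rmult_1_l; apply Hb, Hc].
      apply Rmult_le_compat_r; [apply Cmod_ge_0|exact Hu]. }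
    assert (Hlin : Re (u * (psi b - psi a))%C = Re (u * psi b)%C - Re (u * psi a)%C)
      by (destruct u, (psi b), (psi a); unfold Re; simpl; ring).
    rewrite <- Hre, Hlin. nra.
Qed.

Lemma Cmod_segment_le (w : C) s : 0 <= s <= 1 -> Cmod (0 + w * RtoC s)%C <= Cmod w.
Proof.
  intros Hs. rewrite Cplus_0_l, Cmod_mult, Cmod_RtoC_nonneg by lra.
  generalize (Cmod_ge_0 w). nra.
Qed.

Lemma Cmod_sub_le_Lipschitz (h h' : C -> C) M w :
  (forall v, Cmod v < 1 -> has_cderiv h v (h' v)) -> (forall v, Cmod v < 1 -> Cmod (h' v) <= M) ->
  Cmod w < 1 -> Cmod (h w - h 0) <= M * Cmod w.
Proof.
  intros Hh HM Hw.
  assert (Hseg : forall s, 0 <= s <= 1 -> Cmod (0 + w * RtoC s)%C < 1)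
    by (intros s Hs; eapply Rle_lt_trans; [apply Cmod_segment_le, Hs|exact Hw]).
  assert (H := Cmod_increment_le (fun s => h (0 + w * RtoC s)%C) (fun s => h' (0 + w * RtoC s)%C * w)%C
    (fun s => M * Cmod w * s) (fun _ => M * Cmod w) 0 1 ltac:(lra)).
  cbv beta in H. replace (0 + w * RtoC 1)%C with w in H by ring. replace (0 + w * RtoC 0)%C with (RtoC 0) in H by ring.
  replace (M * Cmod w) with (M * Cmod w * 1 - M * Cmod w * 0) by ring. apply H.
  - intros s Hs. apply (has_rderiv_comp h (fun s => 0 + w * RtoC s)%C);
      [apply has_rderiv_line|apply Hh, Hseg, Hs].
  - intros s _. auto_derive; [exact I|ring].
  - intros s Hs. rewrite Cmod_mult. apply Rmult_le_compat_r; [apply Cmod_ge_0|apply HM, Hseg, Hs].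
Qed.

Lemma C_continuous_bound (h : C -> C) B r : 0 < r -> C_continuous h 0 ->
  (forall z : C, z <> RtoC 0 -> Cmod z < r -> Cmod (h z) <= B) -> Cmod (h 0) <= B.
Proof.
  intros Hr Hc Hb. apply le_epsilon. intros eps Heps.
  destruct (Hc eps Heps) as [d [Hd Hd2]].
  set (x := Rmin d r / 2).
  assert (Hx : 0 < x < Rmin d r) by (unfold x; generalize (Rmin_pos d r Hd Hr); lra).
  assert (Hxc : Cmod (RtoC x) = x) by (apply Cmod_RtoC_nonneg; lra).
  assert (Hx0 : RtoC x <> 0%C) by (apply RtoC_neq_0; lra).
  assert (H1 := Hb (RtoC x) Hx0 ltac:(generalize (Rmin_r d r); lra)).
  assert (H2 : Cmod (h (RtoC x) - h 0) < eps).
  { apply Hd2. rewrite Cminus_0_r, Hxc. generalize (Rmin_l d r); lra. }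
  generalize (Cmod_triangle_rev (h 0) (h (RtoC x))). rewrite Cmod_minus_sym. lra.
Qed.

Definition defect (f f1 : C -> C) (z : C) : C := (z * f1 z - f z)%C.

Section Sufficiency.

Variables (lam : R) (f f1 f2 : C -> C).
Hypothesis lam_pos : 0 < lam.
Hypothesis f_deriv : forall z, unit_disk z -> has_cderiv f z (f1 z).
Hypothesis f1_deriv : forall z, unit_disk z -> has_cderiv f1 z (f2 z).
Hypothesis f_0 : f (RtoC 0) = RtoC 0.
Hypothesis f1_0 : f1 (RtoC 0) = RtoC 1.
Hypothesis f2_bounded : forall z, unit_disk z -> Cmod (f2 z) <= 2 * lam.

Lemma has_cderiv_defect z : unit_disk z -> has_cderiv (defect f f1) z (z * f2 z)%C.
Proof.
  intros Hz.
  assert (H := has_cderiv_minus _ _ z _ _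
    (has_cderiv_mult _ _ z _ _ (has_cderiv_id z) (f1_deriv z Hz)) (f_deriv z Hz)).
  replace (z * f2 z)%C with (RtoC 1 * f1 z + z * f2 z - f1 z)%C by ring. exact H.
Qed.

Lemma Cmod_defect_le z : unit_disk z -> Cmod (defect f f1 z) <= lam * Cmod z ^ 2.
Proof.
  intros Hz.
  assert (Hseg : forall s, 0 <= s <= 1 -> unit_disk (0 + z * RtoC s)%C)
    by (intros s Hs; eapply Rle_lt_trans; [apply Cmod_segment_le, Hs|exact Hz]).
  assert (H := Cmod_increment_le (fun s => defect f f1 (0 + z * RtoC s)%C)
    (fun s => (0 + z * RtoC s) * f2 (0 + z * RtoC s) * z)%C
    (fun s => lam * Cmod z ^ 2 * s ^ 2) (fun s => lam * Cmod z ^ 2 * (2 * s)) 0 1 ltac:(lra)).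
  cbv beta in H. replace (0 + z * RtoC 1)%C with z in H by ring.
  replace (0 + z * RtoC 0)%C with (RtoC 0) in H by ring.
  replace (defect f f1 (RtoC 0)) with (RtoC 0) in H by (unfold defect; rewrite f_0; ring).
  rewrite Cminus_0_r in H. replace (lam * Cmod z ^ 2) with (lam * Cmod z ^ 2 * 1 ^ 2 - lam * Cmod z ^ 2 * 0 ^ 2)
    by ring. apply H.
  - intros s Hs. apply (has_rderiv_comp (defect f f1) (fun s => 0 + z * RtoC s)%C);
      [apply has_rderiv_line|apply has_cderiv_defect, Hseg, Hs].
  - intros s _. auto_derive; [exact I|ring].
  - intros s Hs. rewrite !Cmod_mult.
    assert (Hs' := Cmod_segment_le z s Hs). rewrite Cplus_0_l, Cmod_mult, Cmod_RtoC_nonneg in * by lra.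
    assert (H2 := f2_bounded _ (Hseg s Hs)). rewrite Cplus_0_l in H2.
    generalize (Cmod_ge_0 z) (Cmod_ge_0 (f2 (z * RtoC s)%C)). intros.
    assert (0 <= Cmod z * s) by nra.
    apply Rle_trans with (Cmod z * s * (2 * lam) * Cmod z); [|right; ring].
    apply Rmult_le_compat_r; [lra|]. apply Rmult_le_compat_l; lra.
Qed.

Lemma Cmod_f1_le w : unit_disk w -> Cmod (f1 w) <= 1 + 2 * lam.
Proof.
  intros Hw. assert (H := Cmod_sub_le_Lipschitz f1 f2 (2 * lam) w f1_deriv f2_bounded Hw).
  rewrite f1_0 in H. replace (f1 w) with ((f1 w - 1) + 1)%C by ring.
  eapply Rle_trans; [apply Cmod_triangle|]. rewrite Cmod_1.
  generalize (Cmod_ge_0 w). unfold unit_disk in Hw. nra.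
Qed.

Lemma Cmod_f_le w : unit_disk w -> Cmod (f w) <= 1 + 2 * lam.
Proof.
  intros Hw. assert (H := Cmod_sub_le_Lipschitz f f1 (1 + 2 * lam) w f_deriv Cmod_f1_le Hw).
  rewrite f_0, Cminus_0_r in H. generalize (Cmod_ge_0 w). unfold unit_disk in Hw. nra.
Qed.

Lemma Ccont_f_circ t : Ccont (fun t => f (circ t)) t.
Proof.
  apply Ccont_comp; [apply Ccont_circ|].
  eapply has_cderiv_C_continuous, f_deriv, circ_in_disk.
Qed.

Lemma Ccont_f_circ_circ t : Ccont (fun t => f (circ t) * circ t)%C t.
Proof. apply (Ccont_mult (fun t => f (circ t))); [apply Ccont_f_circ|apply Ccont_circ]. Qed.

Lemma Cmod_f_circ_circ_le t : Cmod (f (circ t) * circ t)%C <= 1 + 2 * lam.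
Proof.
  rewrite Cmod_mult, Cmod_circ. generalize (Cmod_f_le _ (circ_in_disk t)) (Cmod_ge_0 (f (circ t))).
  lra.
Qed.

Lemma cauchy_formula_f z : Cmod z < /3 ->
  cauchy_int (fun t => f (circ t) * circ t)%C 1 z = (RtoC (2 * PI) * f z)%C.
Proof.
  apply (cauchy_formula f f1 z (fun w Hw => f_deriv w Hw)
    (fun w Hw => has_cderiv_C_continuous _ _ _ (f1_deriv w Hw))).
Qed.

Lemma f1_cauchy z : Cmod z < /4 ->
  f1 z = (cauchy_int (fun t => f (circ t) * circ t) 2 z * / RtoC (2 * PI))%C.
Proof.
  intros Hz. apply (has_cderiv_unique f z); [apply f_deriv; unfold unit_disk; lra|].
  apply (has_cderiv_ext_loc (fun w => cauchy_int (fun t => f (circ t) * circ t) 1 w * / RtoC (2 * PI))%C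
    f z _ (/12)); [lra| |].
  - intros w Hw. rewrite cauchy_formula_f; [field; apply RtoC_2PI_neq_0|].
    generalize (Cmod_triangle (w - z) z). replace (w - z + z)%C with w by ring. lra.
  - apply has_cderiv_Cmult_r, (has_cderiv_cauchy_int1 _ (1 + 2 * lam));
      [apply Ccont_f_circ_circ|apply Cmod_f_circ_circ_le|lra].
Qed.

Definition defect_quotient (z : C) : C :=
  (cauchy_int (fun t => f (circ t)) 2 z * / RtoC (2 * PI))%C.

Lemma defect_factor z : Cmod z < /4 -> defect f f1 z = (z ^ 2 * defect_quotient z)%C.
Proof.
  intros Hz. assert (Hz2 : Cmod z < /2) by lra.
  assert (H0 : Cmod (RtoC 0) < /2) by (rewrite Cmod_0; lra).
  set (a := fun t => (f (circ t) * circ t)%C).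
  (* z / (w - z)^2 - 1 / (w - z) + 1 / w = z^2 / (w (w - z)^2),
     and cauchy_int a 1 0 = 2 pi f 0 = 0. *)
  assert (E : (z * cauchy_int a 2 z - cauchy_int a 1 z + cauchy_int a 1 0)%C
              = (z ^ 2 * cauchy_int (fun t => f (circ t)) 2 z)%C).
  { transitivity (CInt (fun t => z ^ 2 * (f (circ t) / (circ t - z) ^ 2)) 0 (2 * PI))%C;
      [symmetry; apply is_CInt_unique|apply is_CInt_unique, is_CInt_Cmult, is_cauchy_int;
        [apply Ccont_f_circ|exact Hz2]].
    refine (is_CInt_ext _ _ _ _ _ _ (is_CInt_plus _ _ _ _ _ _
      (is_CInt_minus _ _ _ _ _ _ (is_CInt_Cmult _ _ _ _ z (is_cauchy_int a Ccont_f_circ_circ 2 z Hz2))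
        (is_cauchy_int a Ccont_f_circ_circ 1 z Hz2)) (is_cauchy_int a Ccont_f_circ_circ 1 0 H0))).
    intros t. assert (Hg := circ_sub_neq_0 t z Hz2). assert (Hg0 := circ_sub_neq_0 t 0 H0).
    rewrite Cminus_0_r in *. unfold a. field. split; assumption. }
  unfold defect, defect_quotient. rewrite f1_cauchy by exact Hz. fold a.
  replace (f z) with (cauchy_int a 1 z * / RtoC (2 * PI))%C
    by (unfold a; rewrite cauchy_formula_f by lra; field; apply RtoC_2PI_neq_0).
  replace (z * (cauchy_int a 2 z * / RtoC (2 * PI)) - cauchy_int a 1 z * / RtoC (2 * PI))%C
    with ((z * cauchy_int a 2 z - cauchy_int a 1 z + cauchy_int a 1 0) * / RtoC (2 * PI))%C
    by (unfold a; rewrite (cauchy_formula_f (RtoC 0)), f_0 by (rewrite Cmod_0; lra); ring).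
  rewrite E. ring.
Qed.

Lemma has_cderiv_defect_quotient :
  has_cderiv defect_quotient 0 (2 * cauchy_int (fun t => f (circ t)) 3 0 * / RtoC (2 * PI))%C.
Proof.
  apply has_cderiv_Cmult_r, (has_cderiv_cauchy_int2 _ (1 + 2 * lam)).
  - apply Ccont_f_circ.
  - intros t. apply Cmod_f_le, circ_in_disk.
  - rewrite Cmod_0. lra.
Qed.

Lemma Cmod_defect_quotient_le z : Cmod z < /4 -> Cmod (defect_quotient z) <= lam.
Proof.
  assert (Hnz : forall w : C, w <> RtoC 0 -> Cmod w < /4 -> Cmod (defect_quotient w) <= lam).
  { intros w Hw0 Hw. assert (Hm : 0 < Cmod w) by (apply Cmod_gt_0, Hw0).
    assert (H := Cmod_defect_le w ltac:(unfold unit_disk; lra)).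
    rewrite defect_factor, Cmod_mult, Cmod_pow in H by exact Hw.
    apply Rmult_le_reg_l with (Cmod w ^ 2); [apply pow_lt, Hm|lra]. }
  intros Hz. destruct (Ceq_dec z 0) as [->|Hz0]; [|apply Hnz; assumption].
  apply (C_continuous_bound _ _ (/4)); [lra| |exact Hnz].
  eapply has_cderiv_C_continuous, has_cderiv_defect_quotient.
Qed.

Definition Omega_phi (w : C) : C :=
  if Ceq_dec w 0 then (defect_quotient 0 * / RtoC lam)%C
  else (defect f f1 w * / (RtoC lam * w ^ 2))%C.

Lemma RtoC_lam_neq_0 : RtoC lam <> 0%C.
Proof. apply RtoC_neq_0. lra. Qed.

Lemma Omega_phi_analytic : analytic_in_disk Omega_phi.
Proof.
  intros z Hz. destruct (Ceq_dec z 0) as [->|Hz0].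
  - eexists. apply (has_cderiv_ext_loc (fun w => defect_quotient w * / RtoC lam)%C _ _ _ (/4)); [lra| |].
    + intros w Hw. rewrite Cminus_0_r in Hw. unfold Omega_phi.
      destruct (Ceq_dec w 0) as [->|Hw0]; [reflexivity|].
      rewrite defect_factor by exact Hw. field. split; [exact Hw0|apply RtoC_lam_neq_0].
    + apply has_cderiv_Cmult_r, has_cderiv_defect_quotient.
  - assert (Hm : 0 < Cmod z) by (apply Cmod_gt_0, Hz0).
    eexists. apply (has_cderiv_ext_loc (fun w => defect f f1 w * / (RtoC lam * w ^ 2))%C _ _ _ (Cmod z));
      [exact Hm| |].
    + intros w Hw. unfold Omega_phi. destruct (Ceq_dec w 0) as [->|]; [|reflexivity].
      rewrite Cmod_minus_sym, Cminus_0_r in Hw. lra.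
    + apply has_cderiv_mult; [apply has_cderiv_defect, Hz|].
      apply (has_cderiv_comp Cinv (fun w => RtoC lam * w ^ 2)%C).
      * apply has_cderiv_Cinv, Cmult_neq_0; [apply RtoC_lam_neq_0|apply Cpow_nz, Hz0].
      * apply (has_cderiv_mult (fun _ => RtoC lam)); [apply has_cderiv_const|].
        apply (has_cderiv_mult (fun w => w)); [apply has_cderiv_id|].
        apply (has_cderiv_mult (fun w => w)); [apply has_cderiv_id|apply has_cderiv_const].
Qed.

Lemma Cmod_Omega_phi_le z : unit_disk z -> Cmod (Omega_phi z) <= 1.
Proof.
  intros Hz. unfold Omega_phi. destruct (Ceq_dec z 0) as [->|Hz0].
  - rewrite Cmod_mult, Cmod_inv, Cmod_RtoC_nonneg by (try apply RtoC_lam_neq_0; lra).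
    apply Rmult_le_reg_r with lam; [exact lam_pos|].
    rewrite Rmult_assoc, Rinv_l, Rmult_1_r, Rmult_1_l by lra.
    apply Cmod_defect_quotient_le. rewrite Cmod_0. lra.
  - assert (Hm : 0 < Cmod z) by (apply Cmod_gt_0, Hz0).
    assert (H := Cmod_defect_le z Hz).
    rewrite Cmod_mult, Cmod_inv, Cmod_mult, Cmod_pow, Cmod_RtoC_nonneg
      by (try apply Cmult_neq_0; try apply RtoC_lam_neq_0; try apply Cpow_nz; try exact Hz0; lra).
    assert (Hp : 0 < lam * Cmod z ^ 2) by (apply Rmult_lt_0_compat; [lra|apply pow_lt, Hm]).
    apply Rmult_le_reg_r with (lam * Cmod z ^ 2); [exact Hp|].
    rewrite Rmult_assoc, Rinv_l, Rmult_1_r, Rmult_1_l by lra. exact H.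
Qed.

Lemma defect_eq_Omega_phi z : defect f f1 z = (RtoC lam * (z * z) * Omega_phi z)%C.
Proof.
  unfold Omega_phi. destruct (Ceq_dec z 0) as [->|Hz0].
  - unfold defect. rewrite f_0. ring.
  - field. split; [exact Hz0|apply RtoC_lam_neq_0].
Qed.

Theorem Omega_of_f2_bound : Omega lam f.
Proof.
  exists f1. split; [exact f_deriv|]. split; [exact f_0|]. split; [exact f1_0|].
  exists Omega_phi. split; [exact Omega_phi_analytic|]. split; [exact Cmod_Omega_phi_le|].
  intros z _. apply defect_eq_Omega_phi.
Qed.

End Sufficiency.

(** * Sharpness *)

Lemma has_cderiv_quadratic (c : R) z :
  has_cderiv (fun w => w + RtoC (c / 2) * (w * w))%C z (1 + RtoC c * z)%C.
Proof.
  assert (H := has_cderiv_plus _ _ z _ _ (has_cderiv_id z)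
    (has_cderiv_mult _ _ z _ _ (has_cderiv_const (RtoC (c / 2)) z)
      (has_cderiv_mult _ _ z _ _ (has_cderiv_id z) (has_cderiv_id z)))).
  cbv beta in H. rewrite RtoC_div in H by lra.
  rewrite RtoC_div by lra. replace (1 + RtoC c * z)%C with (RtoC 1 + (RtoC 0 * (z * z) + RtoC c / RtoC 2 * (RtoC 1 * z + z * RtoC 1)))%C.
  - exact H.
  - field.
Qed.

Lemma not_Omega_quadratic (lam c : R) : 0 < lam -> 2 * lam < c ->
  ~ Omega lam (fun z => z + RtoC (c / 2) * (z * z))%C.
Proof.
  intros Hlam Hc [g1 [Hg1 [_ [_ [phi [_ [Hphi Heq]]]]]]].
  set (h := RtoC (/2)).
  assert (Hh : unit_disk h) by (unfold unit_disk, h; rewrite Cmod_RtoC_nonneg; lra).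
  assert (E1 : g1 h = (1 + RtoC c * h)%C)
    by (apply (has_cderiv_unique (fun z => z + RtoC (c / 2) * (z * z))%C h); [apply Hg1, Hh|apply has_cderiv_quadratic]).
  specialize (Heq h Hh). rewrite E1 in Heq.
  assert (E2 : phi h = RtoC (c / (2 * lam))).
  { assert (Hh0 : h <> 0%C) by (apply RtoC_neq_0; lra).
    assert (Hl0 : RtoC lam <> 0%C) by (apply RtoC_neq_0; lra).
    replace (phi h) with (RtoC lam * (h * h) * phi h / (RtoC lam * (h * h)))%C
      by (field; split; assumption).
    rewrite <- Heq. unfold h. rewrite !RtoC_div, RtoC_inv, RtoC_mult by lra.
    field. apply RtoC_neq_0; lra. }
  specialize (Hphi h Hh). rewrite E2, Cmod_RtoC_nonneg in Hphi
    by (apply Rlt_le, Rdiv_lt_0_compat; lra).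
  apply Rmult_le_compat_r with (r := 2 * lam) in Hphi; [|lra].
  replace (c / (2 * lam) * (2 * lam)) with c in Hphi by (field; lra). lra.
Qed.

Theorem theorem4p3 :
  forall lam : R, 0 < lam ->
  (* sufficiency: |f''| <= 2 lam on D implies f in Omega_lam *)
  (forall f f1 f2 : C -> C,
     (forall z, unit_disk z -> has_cderiv f z (f1 z)) ->
     (forall z, unit_disk z -> has_cderiv f1 z (f2 z)) ->
     f (RtoC 0) = RtoC 0 -> f1 (RtoC 0) = RtoC 1 ->
     (forall z, unit_disk z -> Cmod (f2 z) <= 2 * lam) ->
     Omega lam f)
  /\
  (* sharpness: 2 lam cannot be replaced by any larger constant *)
  (forall c : R, 2 * lam < c ->
     exists f f1 f2 : C -> C,
       (forall z, unit_disk z -> has_cderiv f z (f1 z)) /\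
       (forall z, unit_disk z -> has_cderiv f1 z (f2 z)) /\
       f (RtoC 0) = RtoC 0 /\ f1 (RtoC 0) = RtoC 1 /\
       (forall z, unit_disk z -> Cmod (f2 z) <= c) /\
       ~ Omega lam f).
Proof.
  intros lam Hlam. split.
  - intros f f1 f2. apply Omega_of_f2_bound, Hlam.
  - intros c Hc.
    exists (fun z => z + RtoC (c / 2) * (z * z))%C, (fun z => 1 + RtoC c * z)%C, (fun _ => RtoC c).
    split; [intros z _; apply has_cderiv_quadratic|].
    split; [intros z _; apply (has_cderiv_ext_loc (fun w => 1 + RtoC c * w)%C _ _ _ 1);
      [lra|reflexivity|apply has_cderiv_affine]|].
    split; [ring|]. split; [ring|].
    split; [intros z _; rewrite Cmod_RtoC_nonneg; lra|].
    apply not_Omega_quadratic; assumption.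
Qed.
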